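(* Let $(S,+)$ be a commutative cancellative semigroup with no identity element such that its difference group $S-S$ carries a multiplication making it an integral domain. Then $\mathcal{J}_p=\{p\in\beta S:\text{every }X\in p\text{ is a }J_p\text{-set in }S\}$ is a compact (two-sided) ideal of $(\beta S,+)$.
   Context: $S-S=\{a-b:a,b\in S\}$ is the difference group of $S$ (with $(a-b)+b=a$), containing $S$. $\mathbb{P}$ denotes the set of integral polynomials on $S-S$: polynomial functions $S-S\to S-S$ in one variable with coefficients in $S-S$ and zero constant term. $\mathcal{P}_f(X)$ denotes the set of nonempty finite subsets of $X$, ${}^{\mathbb{N}}S$ the set of sequences $g:\mathbb{N}\to S$, $\mathbb{N}=\{1,2,\dots\}$. For $R\in\mathcal{P}_f(\mathbb{P})$, $L\in\mathcal{P}_f({}^{\mathbb{N}}S)$, $a\in S$, $H\in\mathcal{P}_f(\mathbb{N})$, let $S_{R,L}(a,H)=\{a+f(\sum_{t\in H}g(t)): f\in R, g\in L\}$. $A\subseteq S$ is a $J_p$-set if for every $R\in\mathcal{P}_f(\mathbb{P})$ and $L\in\mathcal{P}_f({}^{\mathbb{N}}S)$ there are $a\in S$, $H\in\mathcal{P}_f(\mathbb{N})$ with $S_{R,L}(a,H)\subseteq A$. $\beta S$ is the Stone–Čech compactification of discrete $S$ (ultrafilters on $S$), with basic open sets $\overline{A}=\{p: A\in p\}$ and operation extended by: $A\in p+q$ iff $\{x\in S: -x+A\in q\}\in p$, where $-x+A=\{s: x+s\in A\}$. An ideal is a subset $I$ with $p+q,q+p\in I$ for all $p\in I$, $q\in\beta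 S$. *)

From Stdlib Require List.
From mathcomp Require Import all_boot all_order all_algebra.
Set Implicit Arguments. Unset Strict Implicit. Unset Printing Implicit Defensive.
Import GRing.Theory.
Local Open Scope ring_scope.

(* The semigroup S is represented as a subset S of its difference group G,
   where G carries an integral-domain structure (G : idomainType).
   sS is the carrier type of S. *)
Definition sS (G : idomainType) (S : pred G) := {x : G | S x}.

Definition inS (G : idomainType) (S : pred G) (A : sS S -> Prop) (y : G) : Prop :=
  exists t : sS S, proj1_sig t = y /\ A t.

Definition integral_poly (G : idomainType) (f : {poly G}) : Prop := f`_0 = 0.

(* H in P_f(N), N = {1,2,...} : nonempty finite set of positive naturals,
   represented by a duplicate-free nonempty list *)
Definition finpos (H : seq nat) : Prop :=
  H <> [::] /\ uniq H /\ all (fun t => 0 < t)%N H.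

Definition SRL_sub (G : idomainType) (S : pred G) (R : seq {poly G})
  (L : seq (nat -> sS S)) (a : sS S) (H : seq nat) (A : sS S -> Prop) : Prop :=
  forall f g, f \in R -> List.In g L ->
    inS A (proj1_sig a + f.[\sum_(t <- H) proj1_sig (g t)]).

Definition Jp_set (G : idomainType) (S : pred G) (A : sS S -> Prop) : Prop :=
  forall (R : seq {poly G}) (L : seq (nat -> sS S)),
    R <> [::] -> (forall f, f \in R -> integral_poly f) -> L <> [::] ->
    exists (a : sS S) (H : seq nat), finpos H /\ SRL_sub R L a H A.

(* Ultrafilters on a type T; points of the Stone-Cech compactification. *)
Definition ultrafilter (T : Type) (p : (T -> Prop) -> Prop) : Prop :=
  [/\ ~ p (fun _ => False),
      p (fun _ => True),
      (forall A B : T -> Prop, p A -> (forall x, A x -> B x) -> p B),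
      (forall A B : T -> Prop, p A -> p B -> p (fun x => A x /\ B x))
    & (forall A : T -> Prop, p A \/ p (fun x => ~ A x))].

Definition pset T := ((T -> Prop) -> Prop) -> Prop.

(* the extended operation on beta S:
   A \in p + q  iff  {x : -x + A \in q} \in p, with -x + A = {s : x + s \in A} *)
Definition bplus (G : idomainType) (S : pred G)
  (p q : (sS S -> Prop) -> Prop) : (sS S -> Prop) -> Prop :=
  fun A => p (fun x => q (fun s => inS A (proj1_sig x + proj1_sig s))).

Definition bS_ideal (G : idomainType) (S : pred G) (I : pset (sS S)) : Prop :=
  (forall p, I p -> ultrafilter p) /\
  forall p q, I p -> ultrafilter q -> I (bplus p q) /\ I (bplus q p).

(* topology of beta S: basic open sets \bar A = {p : A \in p} *)
Definition bS_open T (U : pset T) : Prop :=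
  forall p, ultrafilter p -> U p ->
    exists A, p A /\ forall q, ultrafilter q -> q A -> U q.

Definition bS_compact T (K : pset T) : Prop :=
  (forall p, K p -> ultrafilter p) /\
  forall (I : Type) (U : I -> pset T),
    (forall i, bS_open (U i)) -> (forall p, K p -> exists i, U i p) ->
    exists F : list I, forall p, K p -> exists i, List.In i F /\ U i p.

Definition Jp_ultra (G : idomainType) (S : pred G) : pset (sS S) :=
  fun p => ultrafilter p /\ forall X, p X -> Jp_set X.

From mathcomp Require Import all_boot all_order all_algebra.
From mathcomp Require filter.
From Stdlib Require Import Classical.
Import GRing.Theory.
Local Open Scope ring_scope.

(* For any property Q of subsets of S, the ultrafilters all of whose members
   satisfy Q form a closed, hence compact, subset of beta S: an ultrafilter
   outside it contains a set failing Q, whose basic open set misses it.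
   J_p-sets are closed under translation, so if -x + A is in p then A is a
   J_p-set; this gives q + p in J_p.  For p + q, the set of x with -x + A in q
   is a J_p-set, providing a and H with -(a + f(sum g)) + A in q for the
   finitely many f in R and g in L; a common element s of these sets makes
   a + s a witness for A. *)

Section Ultrafilter.
Context {T : Type} {p : (T -> Prop) -> Prop}.
Hypothesis p_ultra : ultrafilter p.

Lemma ultraS {A B : T -> Prop} : p A -> (forall x, A x -> B x) -> p B.
Proof. by case: p_ultra => _ _ pS _ _; apply: pS. Qed.

Lemma ultra_ex {A : T -> Prop} : p A -> exists x, A x.
Proof.
move=> pA; apply: NNPP => noA; case: p_ultra => p0 _ _ _ _; apply: p0.
by apply: (ultraS pA) => x Ax; apply: noA; exists x.
Qed.

Lemma ultraN {A : T -> Prop} : ~ p A -> p (fun x => ~ A x).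
Proof. by move=> npA; case: p_ultra => _ _ _ _ pC; case: (pC A). Qed.

Lemma ultra_bigI {I : Type} {P : I -> T -> Prop} {l : list I} :
  (forall i, List.In i l -> p (P i)) ->
  p (fun x => forall i, List.In i l -> P i x).
Proof.
case: p_ultra => _ pT _ pI _; elim: l => [|i l IHl] pP.
  by apply: (ultraS pT) => x _ i [].
have pPl := IHl (fun j jl => pP j (or_intror jl)).
apply: (ultraS (pI _ _ (pP i (or_introl erefl)) pPl)) => x [Pix Plx] j [<-|jl] //.
exact: Plx.
Qed.

Lemma ultra_cover {l : list (T -> Prop)} :
  (forall x, exists D, List.In D l /\ D x) -> exists D, List.In D l /\ p D.
Proof.
move=> cover; apply: NNPP => none.
have [x avoid] : exists x, forall D, List.In D l -> ~ D x.
  apply: ultra_ex; apply: ultra_bigI => D Dl.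
  by apply: ultraN => pD; apply: none; exists D.
by have [D [Dl Dx]] := cover x; exact: avoid Dl Dx.
Qed.

End Ultrafilter.

Section UltrafilterExistence.
Context {T : Type} (Bad : (T -> Prop) -> Prop).
Hypothesis no_finite_cover : forall l : list (T -> Prop),
  (forall D, List.In D l -> Bad D) -> ~ (forall x, exists D, List.In D l /\ D x).

Definition avoiding_filter (B : T -> Prop) : Prop := exists l : list (T -> Prop),
  (forall D, List.In D l -> Bad D) /\ forall x, (forall D, List.In D l -> ~ D x) -> B x.

Lemma avoiding_filter_proper : filter.ProperFilter avoiding_filter.
Proof.
constructor.
  move=> [l [lBad sub]]; apply: (no_finite_cover l lBad) => x; apply: NNPP => xout.
  by apply: (sub x) => D Dl Dx; apply: xout; exists D.
constructor.
- by exists nil; split=> // D [].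
- move=> A B [l1 [Bad1 sub1]] [l2 [Bad2 sub2]]; exists (l1 ++ l2); split.
    by move=> D Dl; case: (List.in_app_or _ _ _ Dl); [apply: Bad1 | apply: Bad2].
  move=> x avoid; split; [apply: sub1 | apply: sub2] => D Dl;
    by apply: avoid; apply: List.in_or_app; auto.
- by move=> A B AB [l [lBad sub]]; exists l; split=> // x /sub /AB.
Qed.

Lemma ultrafilter_avoiding : exists r, ultrafilter r /\ forall D, Bad D -> ~ r D.
Proof.
have [r [r_ultra avoid_r]] := filter.ultraFilterLemma avoiding_filter_proper.
have r_proper := @filter.ultra_proper _ _ r_ultra.
have r_filter := @filter.filter_filter _ _ r_proper.
have ur : ultrafilter r.
  split.
  - exact: filter.filter_not_empty.
  - exact: filter.filterT.
  - by move=> A B rA AB; apply: filter.filterS rA.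
  - by move=> A B; apply: filter.filterI.
  - by move=> A; apply: filter.in_ultra_setVsetC.
exists r; split=> // D BadD rD.
have rnD : r (fun x => ~ D x).
  by apply: avoid_r; exists [:: D]; split=> [_ [<-|[]] | x] //; apply; left.
case: (ur) => r0 _ _ rI _; apply: r0.
by apply: filter.filterS (rI _ _ rD rnD) => x [].
Qed.

End UltrafilterExistence.

Section CompactUltrafilters.
Context {T : Type} (Q : (T -> Prop) -> Prop).

Definition ultra_all (p : (T -> Prop) -> Prop) : Prop :=
  ultrafilter p /\ forall X, p X -> Q X.

Section Cover.
Context {I : Type} (U : I -> pset T).

Definition cover_bad (D : T -> Prop) : Prop :=
  ~ Q D \/ exists i, forall q, ultrafilter q -> q D -> U i q.

Lemma cover_bad_subcover {l : list (T -> Prop)} :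
  (forall D, List.In D l -> cover_bad D) ->
  exists F : list I, forall p, ultra_all p -> (exists D, List.In D l /\ p D) ->
    exists i, List.In i F /\ U i p.
Proof.
elim: l => [|D l IHl] lbad; first by exists nil => p _ [D [[]]].
have [F subF] := IHl (fun D' D'l => lbad D' (or_intror D'l)).
case: (lbad D (or_introl erefl)) => [notQ | [i DU]].
  exists F => p pQ [D' [[<-|D'l] pD']]; last by apply: subF => //; exists D'.
  by case: notQ; exact: pQ.2 _ pD'.
exists (i :: F) => p pQ [D' [[<-|D'l] pD']].
  by exists i; split; [left | exact: DU pQ.1 pD'].
have [j [jF Ujp]] : exists j, List.In j F /\ U j p by apply: subF => //; exists D'.
by exists j; split; [right|].
Qed.

End Cover.

Lemma ultra_all_compact : bS_compact ultra_all.
Proof.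
split=> [p [] //|I U U_open U_cover].
apply: NNPP => no_subcover.
have [r [r_ultra r_good]] : exists r, ultrafilter r /\ forall D, cover_bad U D -> ~ r D.
  apply: ultrafilter_avoiding => l lbad l_cover.
  have [F subF] := cover_bad_subcover U lbad.
  by case: no_subcover; exists F => p pQ; exact: subF p pQ (ultra_cover pQ.1 l_cover).
have rQ : ultra_all r.
  by split=> // X rX; apply: NNPP => notQ; apply: (r_good X) => //; left.
have [i Uir] := U_cover r rQ.
have [A [rA AU]] := U_open i r r_ultra Uir.
by apply: (r_good A) => //; right; exists i.
Qed.

End CompactUltrafilters.

Lemma In_mem {I : eqType} (i : I) (l : seq I) : List.In i l <-> i \in l.
Proof.
elim: l => [|j l IHl] //=; rewrite in_cons IHl.
by split=> [[->|] | /orP[/eqP->|]]; rewrite ?eqxx //; auto=> ->; rewrite orbT.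
Qed.

Section JpIdeal.
Variables (G : idomainType) (S : pred G).
Hypothesis S_add : forall x y, S x -> S y -> S (x + y).

Local Notation T := (sS S).

Definition splus (x y : T) : T :=
  exist _ (val x + val y) (S_add _ _ (valP x) (valP y)).

(* [shift A x] is the paper's [-x + A]. *)
Definition shift (A : T -> Prop) (x : T) : T -> Prop := fun s => inS A (val x + val s).

Lemma inS_val (A : T -> Prop) (t : T) : inS A (val t) <-> A t.
Proof. by split=> [[u [/val_inj -> //]] | At]; exists t. Qed.

Lemma bplus_ultra (p q : (T -> Prop) -> Prop) :
  ultrafilter p -> ultrafilter q -> ultrafilter (bplus p q).
Proof.
move=> up uq; have [_ pT _ pI pC] := up; have [_ qT _ qI _] := uq.
rewrite /bplus; split.
- by move=> /(ultra_ex up) [x /(ultra_ex uq) [s [t []]]].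
- apply: (ultraS up pT) => x _; apply: (ultraS uq qT) => s _.
  by apply/(inS_val (fun _ => True) (splus x s)).
- move=> A B pA AB; apply: (ultraS up pA) => x qA; apply: (ultraS uq qA) => s [t [<- At]].
  by exists t; split=> //; apply: AB.
- move=> A B pA pB; apply: (ultraS up (pI _ _ pA pB)) => x [qA qB].
  apply: (ultraS uq (qI _ _ qA qB)) => s [[t [et At]] [u [eu Bu]]].
  by exists t; split=> //; split=> //; rewrite (val_inj (etrans et (esym eu))).
- move=> A; case: (pC (fun x => q (shift A x))) => [|pnA]; first by left.
  right; apply: (ultraS up pnA) => x /(ultraN uq) qnA; apply: (ultraS uq qnA) => s nA.
  exists (splus x s); split=> // As; apply: nA; exact/(inS_val A (splus x s)).
Qed.

Lemma Jp_set_shift (A : T -> Prop) (x : T) : Jp_set (shift A x) -> Jp_set A.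
Proof.
move=> J R L R0 R_int L0; have [a [H [HP sub]]] := J R L R0 R_int L0.
exists (splus x a), H; split=> // f g fR gL.
have [t [et At]] := sub f g fR gL.
by move: At; rewrite /shift /= et addrA.
Qed.

Lemma Jp_set_shift_ultra (q : (T -> Prop) -> Prop) (A : T -> Prop) :
  ultrafilter q -> Jp_set (fun x => q (shift A x)) -> Jp_set A.
Proof.
move=> uq J R L R0 R_int L0; have [a [H [HP sub]]] := J R L R0 R_int L0.
pose image (f : {poly G}) (g : nat -> T) := val a + f.[\sum_(t <- H) val (g t)].
have qA : q (fun s => forall f, List.In f R -> forall g, List.In g L ->
    inS A (image f g + val s)).
  apply: (ultra_bigI uq) => f fR; apply: (ultra_bigI uq) => g gL; rewrite /image.
  by have [t [<- qAt]] := sub f g (proj1 (In_mem f R) fR) gL.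
have [s As] := ultra_ex uq qA.
exists (splus a s), H; split=> // f g fR gL.
by have := As f (proj2 (In_mem f R) fR) g gL; rewrite /image /= addrAC.
Qed.

Lemma Jp_ultra_addl (p q : (T -> Prop) -> Prop) :
  Jp_ultra p -> ultrafilter q -> Jp_ultra (bplus q p).
Proof.
move=> [up pJ] uq; split=> [|A /(ultra_ex uq) [x pA]]; first exact: bplus_ultra.
exact: Jp_set_shift (pJ _ pA).
Qed.

Lemma Jp_ultra_addr (p q : (T -> Prop) -> Prop) :
  Jp_ultra p -> ultrafilter q -> Jp_ultra (bplus p q).
Proof.
move=> [up pJ] uq; split=> [|A pqA]; first exact: bplus_ultra.
exact: Jp_set_shift_ultra uq (pJ _ pqA).
Qed.

End JpIdeal.

Theorem lemma5p1 (G : idomainType) (S : pred G)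
  (S_add : forall x y, S x -> S y -> S (x + y))
  (S_diff : forall z : G, exists a b, S a /\ S b /\ z = a - b)
  (S_noid : ~ (exists e, S e /\ forall s, S s -> e + s = s)) :
  bS_compact (@Jp_ultra G S) /\ bS_ideal (@Jp_ultra G S).
Proof.
split; first exact: (ultra_all_compact (@Jp_set G S)).
split=> [p [] // | p q pJ uq].
by split; [apply: Jp_ultra_addr | apply: Jp_ultra_addl].
Qed.
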